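(* In the setting below, let $\varepsilon:U(N)\to k$ be the augmentation map. Then: (1) there is a $k$-algebra homomorphism $\Phi_w:U(N)((t_w;\delta_w))\to k((t_z))$, $\sum_i t_w^if_i\mapsto\sum_i t_z^i\varepsilon(f_i)$ ($f_i\in U(N)$); (2) there is a $k$-algebra homomorphism $\Phi_v:U(N)((t_w;\delta_w))((t_v;\delta_v))\to k((t_z))((t_y))$, $\sum_i t_v^ig_i\mapsto\sum_i t_y^i\Phi_w(g_i)$; (3) there is a $k$-algebra homomorphism $\Phi_u:U(N)((t_w;\delta_w))((t_v;\delta_v))((t_u;\delta_u))\to k((t_z))((t_y))((t_x;\delta_x))$, $\sum_it_u^ih_i\mapsto\sum_it_x^i\Phi_v(h_i)$.
   Context: Let $k$ be a field, $H=\langle x,y\mid[[y,x],x]=[[y,x],y]=0\rangle$ the Heisenberg Lie $k$-algebra, $z=[y,x]$; $L$ a Lie $k$-algebra generated by $u,v$ with a Lie homomorphism $\rho:L\to H$, $u\mapsto x$, $v\mapsto y$; $N=\ker\rho$, $w=[v,u]$. For an element $s$ of an algebra, $\delta_s(f)=fs-sf$. For a $k$-algebra $R$ with derivation $\delta$, $R((t;\delta))$ is the ring of Laurent series $\sum_{i\ge n}t^ia_i$ ($a_i\in R$) with $at^{-1}=t^{-1}a+\delta(a)$, i.e. $at=\sum_{i\ge1}t^i(-1)^{i-1}\delta^{i-1}(a)$; when $\delta=0$ we write $R((t))$. Here $\delta_w$ is the restriction to $U(N)$ of the inner derivation by $w$ in $U(L)$; $\delta_v$ is extended from $U(N)[w;\delta_w]$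 to $U(N)((t_w;\delta_w))$ by $\delta_v(t_w)=-t_w\delta_v(w)t_w$ and termwise on series; $\delta_u$ is extended similarly to $U(N)((t_w;\delta_w))((t_v;\delta_v))$ with $\delta_u(t_w)=-t_w\delta_u(w)t_w$, $\delta_u(t_v)=-t_v w t_v$. On the other side $\delta_x$ is the derivation of $k((t_z))((t_y))$ with $\delta_x(k)=0$, $\delta_x(t_z)=0$, $\delta_x(t_y)=-t_yzt_y$ (with $z=t_z^{-1}$), acting termwise on series. The augmentation $\varepsilon$ is the $k$-algebra homomorphism $U(N)\to k$ with $\varepsilon(N)=0$. *)

From HB Require Import structures.
From mathcomp Require Import all_boot all_order all_algebra.
From Stdlib Require Import ClassicalEpsilon.
Set Implicit Arguments. Unset Strict Implicit. Unset Printing Implicit Defensive.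
Import Order.TTheory GRing.Theory Num.Theory.
Local Open Scope ring_scope.

Definition is_lie (k : fieldType) (L : lmodType k) (br : L -> L -> L) : Prop :=
  [/\ (forall c a b d, br (c *: a + b) d = c *: br a d + br b d),
      (forall c a b d, br d (c *: a + b) = c *: br d a + br d b),
      (forall a, br a a = 0) &
      (forall a b d, br a (br b d) + br b (br d a) + br d (br a b) = 0)].

Definition lie_generated (k : fieldType) (L : lmodType k) (br : L -> L -> L)
  (u v : L) : Prop :=
  forall P : L -> Prop, P u -> P v ->
    (forall a b, P a -> P b -> P (a + b)) ->
    (forall c a, P a -> P (c *: a)) ->
    (forall a b, P a -> P b -> P (br a b)) -> forall a, P a.

(* The Heisenberg Lie algebra H, realised on k^3 with basis
   x = (1,0,0), y = (0,1,0), z = (0,0,1) = [y,x], z central. *)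
Definition heis (k : fieldType) := (k * k * k)%type.
Definition hadd (k : fieldType) (p q : heis k) : heis k :=
  (p.1.1 + q.1.1, p.1.2 + q.1.2, p.2 + q.2).
Definition hscale (k : fieldType) (c : k) (p : heis k) : heis k :=
  (c * p.1.1, c * p.1.2, c * p.2).
Definition hbr (k : fieldType) (p q : heis k) : heis k :=
  (0, 0, p.1.2 * q.1.1 - p.1.1 * q.1.2).
Definition hx (k : fieldType) : heis k := (1, 0, 0).
Definition hy (k : fieldType) : heis k := (0, 1, 0).
Definition hzero (k : fieldType) : heis k := (0, 0, 0).

Definition is_lie_hom (k : fieldType) (L : lmodType k) (br : L -> L -> L)
  (rho : L -> heis k) : Prop :=
  (forall c a b, rho (c *: a + b) = hadd (hscale c (rho a)) (rho b)) /\
  (forall a b, rho (br a b) = hbr (rho a) (rho b)).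

Record aops (k : fieldType) := AOps {
  acar :> Type;
  a0 : acar; a1 : acar;
  aadd : acar -> acar -> acar;
  aopp : acar -> acar;
  amul : acar -> acar -> acar;
  ascl : k -> acar -> acar }.

Definition aops_of_alg (k : fieldType) (A : algType k) : aops k :=
  @AOps k A 0 1 +%R -%R *%R *:%R.
Definition kops (k : fieldType) : aops k :=
  @AOps k k 0 1 +%R -%R *%R *%R.

Definition is_ahom (k : fieldType) (A B : aops k) (f : A -> B) : Prop :=
  [/\ (forall a b, f (aadd a b) = aadd (f a) (f b)),
      (forall a b, f (amul a b) = amul (f a) (f b)),
      f (a1 A) = a1 B &
      (forall c a, f (ascl c a) = ascl c (f a))].

Definition is_der (k : fieldType) (A : algType k) (D : A -> A) : Prop :=
  [/\ (forall a b, D (a + b) = D a + D b),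
      (forall c a, D (c *: a) = c *: D a) &
      (forall a b, D (a * b) = D a * b + a * D b)].

(* Universal enveloping algebra of the Lie subalgebra N = {a | inN a} of
   L: iota : L -> U (only its values on N matter) is a Lie map on N, and
   (U, iota) is universal among Lie maps from N into k-algebras. *)
Definition lie_map_on (k : fieldType) (L : lmodType k) (br : L -> L -> L)
  (inN : L -> Prop) (B : algType k) (f : L -> B) : Prop :=
  (forall c a b, inN a -> inN b -> f (c *: a + b) = c *: f a + f b) /\
  (forall a b, inN a -> inN b -> f (br a b) = f a * f b - f b * f a).

Definition is_env_alg (k : fieldType) (L : lmodType k) (br : L -> L -> L)
  (inN : L -> Prop) (U : algType k) (iota : L -> U) : Prop :=
  lie_map_on br inN iota /\
  forall (B : algType k) (f : L -> B), lie_map_on br inN f ->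
    exists g : U -> B,
      [/\ is_ahom (A := aops_of_alg U) (B := aops_of_alg B) g,
          (forall a, inN a -> g (iota a) = f a) &
          (forall g' : U -> B,
             is_ahom (A := aops_of_alg U) (B := aops_of_alg B) g' ->
             (forall a, inN a -> g' (iota a) = f a) -> forall x, g' x = g x)].

(* Skew Laurent series  A((t; d)) = { sum_{i >= n} t^i a_i }.           *)
Definition lser (k : fieldType) (A : aops k) : Type :=
  {f : int -> A | exists lo : int, forall n : int, n < lo -> f n = a0 A}.

Definition coef (k : fieldType) (A : aops k) (s : lser A) : int -> A :=
  proj1_sig s.

Definition lob (k : fieldType) (A : aops k) (s : lser A) : int :=
  proj1_sig (constructive_indefinite_description _ (proj2_sig s)).

Lemma mk_ser_proof (k : fieldType) (A : aops k) (L : int) (g : int -> A) :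
  exists lo : int, forall n : int, n < lo ->
    (fun n => if n < L then a0 A else g n) n = a0 A.
Proof. by exists L => n /= ->. Qed.

Definition mk_ser (k : fieldType) (A : aops k) (L : int) (g : int -> A)
  : lser A := exist _ _ (mk_ser_proof L g).

Definition asum (k : fieldType) (A : aops k) (I : Type) (r : seq I)
  (F : I -> A) : A := foldr (fun i acc => aadd (F i) acc) (a0 A) r.

Definition irange (lo hi : int) : seq int :=
  if lo <= hi then [seq lo + (i%:Z) | i <- iota 0 (absz (hi - lo)%R).+1]
  else [::].

(* generalised binomial coefficient binom(z, m) for z : int *)
Definition gbin (z : int) (m : nat) : int :=
  match z with
  | Posz n => ('C(n, m))%:Z
  | Negz n => (-1) ^+ m * ('C(n + m, m))%:Z   (* z = -(n+1) *)
  end.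

Section Laurent.
Variables (k : fieldType) (A : aops k) (d : A -> A).

Definition ser_zero : lser A := mk_ser 0 (fun _ => a0 A).
Definition ser_mono (i : int) (a : A) : lser A :=
  mk_ser i (fun n => if n == i then a else a0 A).
Definition ser_const (a : A) : lser A := ser_mono 0 a.
Definition ser_one : lser A := ser_const (a1 A).
Definition ser_add (s r : lser A) : lser A :=
  mk_ser (if lob s < lob r then lob s else lob r)
         (fun n => aadd (coef s n) (coef r n)).
Definition ser_opp (s : lser A) : lser A :=
  mk_ser (lob s) (fun n => aopp (coef s n)).
Definition ser_scl (c : k) (s : lser A) : lser A :=
  mk_ser (lob s) (fun n => ascl c (coef s n)).
(* (t^i a)(t^j b) = sum_m binom(-j,m) t^(i+j+m) d^m(a) b,
   from a t^(-1) = t^(-1) a + d(a). *)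
Definition ser_mul (s r : lser A) : lser A :=
  mk_ser (lob s + lob r) (fun n =>
    asum (irange (lob s) (n - lob r)) (fun i =>
      asum (irange (lob r) (n - i)) (fun j =>
        ascl ((gbin (- j) (absz (n - i - j)%R))%:~R)
             (amul (iter (absz (n - i - j)%R) d (coef s i)) (coef r j))))).

Definition laurent : aops k :=
  @AOps k (lser A) ser_zero ser_one ser_add ser_opp ser_mul ser_scl.

Definition tpow (i : int) : laurent := ser_mono i (a1 A).

(* Extension to A((t; d)) of a derivation D of A, determined by
   D(t) = - t c t (where c = D(t^(-1))), Leibniz on powers of t and
   acting termwise on series: D(sum t^i f_i) = sum (D(t^i) f_i + t^i D(f_i)). *)
Variables (D : A -> A) (c : A).
Definition Dt1 : laurent :=
  aopp (amul (tpow 1) (amul (ser_const c : laurent) (tpow 1))).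
Definition Dpow (i : int) : laurent :=
  match i with
  | Posz n => asum (iota 0 n) (fun a =>
                amul (tpow a%:Z) (amul Dt1 (tpow (n.-1 - a)%N%:Z)))
  | Negz n => asum (iota 0 n.+1) (fun a =>   (* i = -(n+1), t^(-1) = w *)
                amul (tpow (- a%:Z))
                  (amul (ser_const c : laurent) (tpow (- (n - a)%N%:Z))))
  end.
Definition ext_der (f : laurent) : laurent :=
  mk_ser (lob f) (fun n =>
    aadd (asum (irange (lob f) n) (fun i =>
            coef (amul (Dpow i) (ser_const (coef f i) : laurent) : lser A) n))
         (D (coef f n))).
End Laurent.

Definition zero_der (k : fieldType) (A : aops k) : A -> A := fun _ => a0 A.
Arguments ext_der {k A} d D c f.
Arguments laurent {k A} d.
Arguments zero_der {k} A _.

From HB Require Import structures.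
From mathcomp Require Import all_boot all_order all_algebra zify.
From Stdlib Require Import ClassicalEpsilon FunctionalExtensionality ProofIrrelevance.
Import Order.TTheory GRing.Theory Num.Theory.
Set Implicit Arguments. Unset Strict Implicit. Unset Printing Implicit Defensive.
Local Open Scope ring_scope.

(* The augmentation [eps] kills every derivation [D] of [U(N)] that maps [N]
   into [N]: [eps + (eps o D) E] is an algebra map into the dual numbers
   [k[E]/(E^2)] agreeing with [eps] on [N], hence equal to it by the universal
   property of [U(N)].  This applies to [d_w], [d_v], [d_u], since a bracket
   with an element of [N] = ker rho lies in [N] (the bracket of [H] is
   bilinear with values in the centre).

   Applying an algebra map [f] coefficientwise to skew Laurent series gives an
   algebra map [A((t; d)) -> B((t; d'))] as soon as [f o d = d' o f], because
   the product only involves [d]; such maps also intertwine the extended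
   derivations.  So [Phi_w] is [eps] coefficientwise.  It sends the extended
   [d_v] and [d_u] to the extension of [0] with [t^-1 |-> eps [w,v] = 0] resp.
   [eps [w,u] = 0], i.e. to the zero derivation, which is also [d_x] on
   [k((t_z))]; so [Phi_v] is [Phi_w] coefficientwise.  Since [Phi_w] maps
   [t_w^-1] to [t_z^-1], [Phi_v] intertwines the extended [d_u] with [d_x],
   and [Phi_u] is [Phi_v] coefficientwise. *)

Lemma sorted_irange lo hi : sorted <%O (irange lo hi).
Proof.
rewrite /irange; case: ifP => // _.
rewrite sorted_map; apply: (sub_sorted _ (iota_ltn_sorted _ _)).
move=> i j /=; lia.
Qed.

Lemma mem_irange lo hi i : (i \in irange lo hi) = (lo <= i <= hi).
Proof.
rewrite /irange; case: ifP => lohi.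
  apply/mapP/idP => [[j]|/andP [loi ihi]].
    by rewrite mem_iota => /andP [_ hj] ->; apply/andP; split; lia.
  exists (absz (i - lo)); last by lia.
  by rewrite mem_iota; apply/andP; split; lia.
rewrite in_nil; apply/esym/negbTE/negP => /andP [loi ihi].
by move/negbT: lohi; lia.
Qed.

Lemma irange_nil lo hi : hi < lo -> irange lo hi = [::].
Proof. by rewrite /irange => hilo; rewrite leNgt hilo. Qed.

Lemma filter_irange_ge lo m hi : lo <= m ->
  filter (fun i => m <= i) (irange lo hi) = irange m hi.
Proof.
move=> lom; apply: lt_sorted_eq; last 1 first.
- by move=> i; rewrite mem_filter !mem_irange; apply/idP/idP => /andP []; lia.
- exact/(sorted_filter lt_trans)/sorted_irange.
- exact: sorted_irange.
Qed.

Lemma filter_irange_le lo m hi : m <= hi ->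
  filter (fun i => i <= m) (irange lo hi) = irange lo m.
Proof.
move=> mhi; apply: lt_sorted_eq; last 1 first.
- by move=> i; rewrite mem_filter !mem_irange; apply/idP/idP => /andP []; lia.
- exact/(sorted_filter lt_trans)/sorted_irange.
- exact: sorted_irange.
Qed.

Section Series.
Variables (k : fieldType) (B : aops k).

Lemma ser_ext (s r : lser B) : (forall n, coef s n = coef r n) -> s = r.
Proof.
case: s r => [f f_lo] [g g_lo] /= fg.
have fg' : f = g by apply: functional_extensionality.
by subst g; rewrite (proof_irrelevance _ f_lo g_lo).
Qed.

Definition ser_bounded (s : lser B) lo := forall i, i < lo -> coef s i = a0 B.

Lemma ser_bounded_lob (s : lser B) : ser_bounded s (lob s).
Proof. by rewrite /lob; case: constructive_indefinite_description. Qed.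

Lemma coef_mk_ser lo g n : coef (mk_ser (A := B) lo g) n = if n < lo then a0 B else g n.
Proof. by []. Qed.

Lemma eq_asum (I : Type) (l : seq I) (F G : I -> B) :
  (forall i, F i = G i) -> asum l F = asum l G.
Proof. by move=> FG; elim: l => //= i l ->; rewrite FG. Qed.

(* [aops] carries no axioms; these are the only laws the series constructions need. *)
Definition zero_laws := [/\ forall x, aadd (a0 B) x = x, forall x, amul (a0 B) x = a0 B,
  forall x, amul x (a0 B) = a0 B, forall c, ascl c (a0 B) = a0 B & aopp (a0 B) = a0 B].

Hypothesis zB : zero_laws.

Lemma add0a x : aadd (a0 B) x = x. Proof. by case: zB. Qed.
Lemma mul0a x : amul (a0 B) x = a0 B. Proof. by case: zB. Qed.
Lemma mula0 x : amul x (a0 B) = a0 B. Proof. by case: zB. Qed.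
Lemma scl0a c : ascl c (a0 B) = a0 B. Proof. by case: zB. Qed.
Lemma opp0a : aopp (a0 B) = a0 B. Proof. by case: zB. Qed.

Lemma asum_filter (I : Type) (P : pred I) (l : seq I) (F : I -> B) :
  (forall i, ~~ P i -> F i = a0 B) -> asum (filter P l) F = asum l F.
Proof.
move=> F0; elim: l => //= i l IHl; case: ifP => Pi /=; rewrite IHl //.
by rewrite F0 ?Pi // add0a.
Qed.

Lemma asum0 (I : Type) (l : seq I) (F : I -> B) :
  (forall i, F i = a0 B) -> asum l F = a0 B.
Proof. by move=> F0; elim: l => //= i l ->; rewrite F0 add0a. Qed.

Lemma coef_ser_zero n : coef (ser_zero B) n = a0 B.
Proof. by rewrite coef_mk_ser; case: ifP. Qed.

Lemma coef_ser_add (s r : lser B) n : coef (ser_add s r) n = aadd (coef s n) (coef r n).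
Proof.
rewrite coef_mk_ser; case: ifP => // n_lt.
have n_lt_s : n < lob s by move: n_lt; case: ifP; lia.
have n_lt_r : n < lob r by move: n_lt; case: ifP; lia.
by rewrite !ser_bounded_lob // add0a.
Qed.

Lemma coef_ser_scl c (s : lser B) n : coef (ser_scl c s) n = ascl c (coef s n).
Proof. by rewrite coef_mk_ser; case: ifP => // n_lt; rewrite ser_bounded_lob // scl0a. Qed.

Lemma coef_ser_opp (s : lser B) n : coef (ser_opp s) n = aopp (coef s n).
Proof. by rewrite coef_mk_ser; case: ifP => // n_lt; rewrite ser_bounded_lob // opp0a. Qed.

Lemma coef_ser_mono i (a : B) n : coef (ser_mono i a) n = if n == i then a else a0 B.
Proof. by rewrite coef_mk_ser; case: ifP => // n_lt; case: eqP => // ni; move: n_lt; lia. Qed.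

Lemma coef_ser_const0 n : coef (ser_const (a0 B)) n = a0 B.
Proof. by rewrite coef_ser_mono; case: eqP. Qed.

Variable d : B -> B.
Hypothesis d0 : d (a0 B) = a0 B.

Lemma coef_asum (I : Type) (l : seq I) (F : I -> lser B) n :
  coef (asum (A := laurent d) l F) n = asum l (fun i => coef (F i) n).
Proof.
by elim: l => [|i l IHl]; [exact: coef_ser_zero | rewrite [RHS]/= -IHl; exact: coef_ser_add].
Qed.

Lemma iter_d0 m : iter m d (a0 B) = a0 B.
Proof. by elim: m => //= m ->. Qed.

Definition mul_term (s r : lser B) n i j :=
  ascl ((gbin (- j) (absz (n - i - j)%R))%:~R)
       (amul (iter (absz (n - i - j)%R) d (coef s i)) (coef r j)).

Definition mul_sum s r lo1 lo2 n := asum (irange lo1 (n - lo2))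
  (fun i => asum (irange lo2 (n - i)) (fun j => mul_term s r n i j)).

Lemma mul_sum_shrink (s r : lser B) lo1 lo2 m1 m2 n : lo1 <= m1 -> lo2 <= m2 ->
  ser_bounded s m1 -> ser_bounded r m2 -> mul_sum s r lo1 lo2 n = mul_sum s r m1 m2 n.
Proof.
move=> lo1m lo2m s_m r_m; rewrite /mul_sum.
have -> : (fun i => asum (irange lo2 (n - i)) (fun j => mul_term s r n i j)) =
          (fun i => asum (irange m2 (n - i)) (fun j => mul_term s r n i j)).
  apply: functional_extensionality => i; rewrite -(filter_irange_ge _ lo2m) asum_filter // => j.
  by rewrite -ltNge => jm; rewrite /mul_term (r_m _ jm) mula0 scl0a.
rewrite -(filter_irange_ge _ lo1m) asum_filter; last first.
  move=> i; rewrite -ltNge => im; apply: asum0 => j.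
  by rewrite /mul_term (s_m _ im) iter_d0 mul0a scl0a.
have n_m2 : n - m2 <= n - lo2 by lia.
rewrite -(filter_irange_le _ n_m2) asum_filter // => i.
by rewrite -ltNge => ni; rewrite irange_nil //; lia.
Qed.

Lemma coef_ser_mul (s r : lser B) n lo1 lo2 : ser_bounded s lo1 -> ser_bounded r lo2 ->
  coef (ser_mul d s r) n = mul_sum s r lo1 lo2 n.
Proof.
move=> s_lo r_lo.
have -> : coef (ser_mul d s r) n = mul_sum s r (lob s) (lob r) n.
  by rewrite coef_mk_ser; case: ifP => // n_lt; rewrite /mul_sum irange_nil //; lia.
have s_max : ser_bounded s (Order.max lo1 (lob s)).
  by move=> i; rewrite lt_max => /orP [] ?; [exact: s_lo | exact: ser_bounded_lob].
have r_max : ser_bounded r (Order.max lo2 (lob r)).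
  by move=> i; rewrite lt_max => /orP [] ?; [exact: r_lo | exact: ser_bounded_lob].
rewrite (mul_sum_shrink _ _ _ s_max r_max) ?le_max ?lexx ?orbT //.
by rewrite (mul_sum_shrink _ _ _ s_max r_max) ?le_max ?lexx.
Qed.

Lemma coef_ser_mulr0 (s r : lser B) n : (forall j, coef r j = a0 B) ->
  coef (ser_mul d s r) n = a0 B.
Proof.
move=> r0; rewrite (coef_ser_mul n (@ser_bounded_lob s) (@ser_bounded_lob r)).
by apply: asum0 => i; apply: asum0 => j; rewrite /mul_term r0 mula0 scl0a.
Qed.

Lemma coef_ser_mul0r (s r : lser B) n : (forall j, coef s j = a0 B) ->
  coef (ser_mul d s r) n = a0 B.
Proof.
move=> s0; rewrite (coef_ser_mul n (@ser_bounded_lob s) (@ser_bounded_lob r)).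
by apply: asum0 => i; apply: asum0 => j; rewrite /mul_term s0 iter_d0 mul0a scl0a.
Qed.

End Series.

Section LaurentOps.
Variables (k : fieldType) (A : aops k) (d : A -> A).
Lemma laurent_zero : a0 (laurent d) = ser_zero A. Proof. by []. Qed.
Lemma laurent_one : a1 (laurent d) = ser_one A. Proof. by []. Qed.
Lemma laurent_add : @aadd k (laurent d) = @ser_add k A. Proof. by []. Qed.
Lemma laurent_opp : @aopp k (laurent d) = @ser_opp k A. Proof. by []. Qed.
Lemma laurent_mul : @amul k (laurent d) = ser_mul d. Proof. by []. Qed.
Lemma laurent_scl : @ascl k (laurent d) = @ser_scl k A. Proof. by []. Qed.
End LaurentOps.

Lemma laurent_zero_laws (k : fieldType) (B : aops k) (d : B -> B) :
  zero_laws B -> d (a0 B) = a0 B -> zero_laws (laurent d).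
Proof.
move=> zB d0.
split=> [x|x|x|c|]; apply: ser_ext => n;
  rewrite ?laurent_zero ?laurent_add ?laurent_mul ?laurent_scl ?laurent_opp ?coef_ser_zero.
- by rewrite (coef_ser_add zB) coef_ser_zero (add0a zB).
- by rewrite (coef_ser_mul0r zB d0) // => j; rewrite coef_ser_zero.
- by rewrite (coef_ser_mulr0 zB d0) // => j; rewrite coef_ser_zero.
- by rewrite (coef_ser_scl zB) coef_ser_zero (scl0a zB).
- by rewrite (coef_ser_opp zB) coef_ser_zero (opp0a zB).
Qed.

Definition is_zmod_ahom (k : fieldType) (A B : aops k) (f : A -> B) :=
  [/\ is_ahom f, f (a0 A) = a0 B & forall a, f (aopp a) = aopp (f a)].

Definition map_ser (k : fieldType) (A B : aops k) (f : A -> B) (s : lser A) : lser B :=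
  mk_ser (lob s) (fun n => f (coef s n)).

Section CoefficientwiseMap.
Variables (k : fieldType) (A B : aops k) (f : A -> B).

Lemma iter_intertwine (dA : A -> A) (dB : B -> B) :
  (forall a, f (dA a) = dB (f a)) -> forall m a, f (iter m dA a) = iter m dB (f a).
Proof. by move=> fd; elim=> //= m IHm a; rewrite fd IHm. Qed.

Hypothesis f0 : f (a0 A) = a0 B.

Lemma additive_asum (I : Type) (l : seq I) (F : I -> A) :
  (forall a b, f (aadd a b) = aadd (f a) (f b)) -> f (asum l F) = asum l (fun i => f (F i)).
Proof. by move=> fD; elim: l => //= i l <-; rewrite fD. Qed.

Lemma coef_map_ser s n : coef (map_ser f s) n = f (coef s n).
Proof. by rewrite coef_mk_ser; case: ifP => // n_lt; rewrite ser_bounded_lob. Qed.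

Lemma ser_bounded_map s lo : ser_bounded s lo -> ser_bounded (map_ser f s) lo.
Proof. by move=> s_lo i i_lt; rewrite coef_map_ser s_lo. Qed.

Lemma map_ser_mono i a : map_ser f (ser_mono i a) = ser_mono i (f a).
Proof. by apply: ser_ext => n; rewrite coef_map_ser !coef_ser_mono; case: eqP. Qed.

Lemma map_ser_const a : map_ser f (ser_const a) = ser_const (f a).
Proof. exact: map_ser_mono. Qed.

End CoefficientwiseMap.

Section CoefficientwiseAhom.
Variables (k : fieldType) (A B : aops k) (f : A -> B) (dA : A -> A) (dB : B -> B).
Hypotheses (zB : zero_laws B) (dB0 : dB (a0 B) = a0 B).
Hypotheses (fz : is_zmod_ahom f) (fd : forall a, f (dA a) = dB (f a)).

Lemma map_ser_zmod_ahom : is_zmod_ahom (A := laurent dA) (B := laurent dB) (map_ser f).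
Proof.
case: fz => [[fD fM f1 fZ] f0 fN].
have coef_lob_map (s : lser A) n : n < lob s -> f (coef s n) = a0 B.
  by move=> n_lt; rewrite ser_bounded_lob.
split; first split.
- move=> s r; rewrite !laurent_add; apply: ser_ext => n.
  rewrite (coef_map_ser f0) (coef_ser_add zB) !(coef_map_ser f0) coef_mk_ser.
  case: ifP => [n_lt|_]; last by rewrite fD.
  have n_lt_s : n < lob s by move: n_lt; case: ifP; lia.
  have n_lt_r : n < lob r by move: n_lt; case: ifP; lia.
  by rewrite !coef_lob_map // f0 (add0a zB).
- move=> s r; rewrite !laurent_mul; apply: ser_ext => n.
  rewrite (coef_map_ser f0) (coef_ser_mul zB dB0 n (ser_bounded_map f0 (@ser_bounded_lob _ _ s))
    (ser_bounded_map f0 (@ser_bounded_lob _ _ r))) coef_mk_ser.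
  case: ifP => [n_lt|_]; first by rewrite f0 /mul_sum irange_nil //; lia.
  rewrite /mul_sum (additive_asum f0 _ _ fD); apply: eq_asum => i.
  rewrite (additive_asum f0 _ _ fD); apply: eq_asum => j.
  by rewrite /mul_term fZ fM (iter_intertwine fd) !(coef_map_ser f0).
- by rewrite !laurent_one /ser_one (map_ser_const f0) f1.
- move=> c s; rewrite !laurent_scl; apply: ser_ext => n.
  rewrite (coef_map_ser f0) (coef_ser_scl zB) (coef_map_ser f0) coef_mk_ser.
  case: ifP => [n_lt|_]; last by rewrite fZ.
  by rewrite coef_lob_map // f0 (scl0a zB).
- by rewrite laurent_zero; apply: ser_ext => n; rewrite (coef_map_ser f0) !coef_ser_zero.
- move=> s; rewrite !laurent_opp; apply: ser_ext => n.
  rewrite (coef_map_ser f0) (coef_ser_opp zB) (coef_map_ser f0) coef_mk_ser.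
  case: ifP => [n_lt|_]; last by rewrite fN.
  by rewrite coef_lob_map // f0 (opp0a zB).
Qed.
End CoefficientwiseAhom.

Section ExtendedDerivation.
Variables (k : fieldType) (B : aops k) (d : B -> B) (D : B -> B) (c : B).
Hypotheses (zB : zero_laws B) (d0 : d (a0 B) = a0 B) (D0 : D (a0 B) = a0 B).

Definition ext_der_coef (s : lser B) n lo :=
  if n < lo then a0 B else
  aadd (asum (irange lo n) (fun i =>
          coef (amul (Dpow d c i) (ser_const (coef s i) : laurent d) : lser B) n))
       (D (coef s n)).

Lemma coef_ext_der s n : coef (ext_der d D c s) n = ext_der_coef s n (lob s).
Proof. by []. Qed.

Lemma ext_der_coef_shrink s n lo m : lo <= m -> ser_bounded s m ->
  ext_der_coef s n lo = ext_der_coef s n m.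
Proof.
move=> lom s_m; rewrite /ext_der_coef.
have term0 i : ~~ (m <= i) ->
    coef (amul (Dpow d c i) (ser_const (coef s i) : laurent d) : lser B) n = a0 B.
  rewrite -ltNge => im; rewrite laurent_mul (coef_ser_mulr0 zB d0) // => j.
  by rewrite s_m // coef_ser_const0.
case: ifP => n_lo; case: ifP => n_m //; first by move: n_lo n_m; lia.
- rewrite -(asum_filter zB _ term0) (filter_irange_ge n lom) irange_nil ?n_m //=.
  by rewrite s_m // D0 (add0a zB).
- by rewrite -(asum_filter zB _ term0) (filter_irange_ge n lom).
Qed.

Lemma coef_ext_der_bounded s n lo : ser_bounded s lo ->
  coef (ext_der d D c s) n = ext_der_coef s n lo.
Proof.
move=> s_lo; have s_max : ser_bounded s (Order.max lo (lob s)).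
  by move=> i; rewrite lt_max => /orP [] ?; [exact: s_lo | exact: ser_bounded_lob].
rewrite coef_ext_der (ext_der_coef_shrink _ _ s_max) ?le_max ?lexx ?orbT //.
by rewrite (ext_der_coef_shrink _ _ s_max) ?le_max ?lexx.
Qed.
End ExtendedDerivation.

Section MapExtendedDerivation.
Variables (k : fieldType) (A B : aops k) (f : A -> B).
Variables (dA : A -> A) (dB : B -> B) (DA : A -> A) (DB : B -> B).
Hypotheses (zB : zero_laws B) (dB0 : dB (a0 B) = a0 B) (DB0 : DB (a0 B) = a0 B).
Hypotheses (fz : is_zmod_ahom f) (fd : forall a, f (dA a) = dB (f a)).
Hypothesis fD : forall a, f (DA a) = DB (f a).

Let f0 : f (a0 A) = a0 B. Proof. by case: fz. Qed.
Let map_fz := map_ser_zmod_ahom zB dB0 fz fd.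

Lemma map_ser_tpow i : map_ser f (tpow dA i) = tpow dB i.
Proof. by case: fz => [[_ _ f1 _] _ _]; rewrite /tpow (map_ser_mono f0) f1. Qed.

Lemma map_ser_Dpow c i : map_ser f (Dpow dA c i) = Dpow dB (f c) i.
Proof.
case: map_fz => [[FD FM _ _] F0 FN].
case: i => n; rewrite /Dpow (additive_asum F0 _ _ FD); apply: (@eq_asum _ (laurent dB)) => a.
  by rewrite /Dt1 !FM FN !FM !map_ser_tpow (map_ser_const f0).
by rewrite !FM !map_ser_tpow (map_ser_const f0).
Qed.

Lemma map_ser_ext_der c s :
  map_ser f (ext_der dA DA c s) = ext_der dB DB (f c) (map_ser f s).
Proof.
case: fz => [[fA _ _ _] _ _]; case: map_fz => [[_ FM _ _] _ _].
apply: ser_ext => n; rewrite (coef_map_ser f0) coef_ext_der.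
rewrite (coef_ext_der_bounded (f c) zB dB0 DB0 _ (ser_bounded_map f0 (@ser_bounded_lob _ _ s))).
rewrite /ext_der_coef; case: ifP => // _.
rewrite fA (additive_asum f0 _ _ fA) fD (coef_map_ser f0); congr aadd; apply: eq_asum => i.
by rewrite -(coef_map_ser f0) FM map_ser_Dpow (map_ser_const f0) (coef_map_ser f0).
Qed.
End MapExtendedDerivation.

Section TrivialExtension.
Variables (k : fieldType) (B : aops k) (d : B -> B).
Hypotheses (zB : zero_laws B) (d0 : d (a0 B) = a0 B).

Lemma coef_Dpow0 i n : coef (Dpow d (a0 B) i) n = a0 B.
Proof.
have coef_Dt1 m : coef (Dt1 d (a0 B)) m = a0 B.
  rewrite /Dt1 laurent_opp (coef_ser_opp zB) laurent_mul (coef_ser_mulr0 zB d0) ?(opp0a zB) //.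
  by move=> j; rewrite (coef_ser_mul0r zB d0) // => j'; rewrite coef_ser_const0.
case: i => m; rewrite /Dpow (coef_asum zB); apply: (asum0 zB) => a;
  rewrite laurent_mul (coef_ser_mulr0 zB d0) // => j; rewrite (coef_ser_mul0r zB d0) //.
by move=> j'; rewrite coef_ser_const0.
Qed.

Lemma ext_der0 (D : B -> B) s : (forall a, D a = a0 B) ->
  ext_der d D (a0 B) s = ser_zero B.
Proof.
move=> D0; apply: ser_ext => n; rewrite coef_ext_der coef_ser_zero /ext_der_coef.
case: ifP => // _; rewrite D0 (asum0 zB) ?(add0a zB) // => i.
by rewrite laurent_mul (coef_ser_mul0r zB d0) // => j; rewrite coef_Dpow0.
Qed.

Lemma ext_der_ser0 (D : B -> B) c : D (a0 B) = a0 B ->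
  ext_der d D c (ser_zero B) = ser_zero B.
Proof.
move=> D0; apply: ser_ext => n; rewrite coef_ext_der coef_ser_zero /ext_der_coef.
case: ifP => // _; rewrite coef_ser_zero D0 (asum0 zB) ?(add0a zB) // => i.
by rewrite laurent_mul (coef_ser_mulr0 zB d0) // => j; rewrite coef_ser_zero coef_ser_const0.
Qed.
End TrivialExtension.

Lemma map_ser_ext_der_eq0 (k : fieldType) (A B : aops k) (f : A -> B)
    (dA DA : A -> A) (c : A) (s : lser A) :
  zero_laws B -> is_zmod_ahom f -> (forall a, f (dA a) = a0 B) ->
  (forall a, f (DA a) = a0 B) -> f c = a0 B ->
  map_ser f (ext_der dA DA c s) = ser_zero B.
Proof.
move=> zB fz fd fD fc.
rewrite (map_ser_ext_der (dB := zero_der B) (DB := zero_der B) zB erefl erefl fz fd fD).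
by rewrite fc ext_der0.
Qed.

Lemma additive_sub (V W : zmodType) (g : V -> W) :
  (forall a b, g (a + b) = g a + g b) -> forall a b, g (a - b) = g a - g b.
Proof. by move=> gD a b; apply: (@addIr _ (g b)); rewrite -gD !subrK. Qed.

Lemma additive0 (V W : zmodType) (g : V -> W) :
  (forall a b, g (a + b) = g a + g b) -> g 0 = 0.
Proof. by move=> gD; have := additive_sub gD 0 0; rewrite !subrr. Qed.

Lemma kops_zero_laws (k : fieldType) : zero_laws (kops k).
Proof. by split=> * /=; rewrite ?add0r ?mul0r ?mulr0 ?oppr0. Qed.

Lemma zmod_ahom_to_kops (k : fieldType) (U : algType k) (eps : U -> k) :
  is_ahom (A := aops_of_alg U) (B := kops k) eps ->
  is_zmod_ahom (A := aops_of_alg U) (B := kops k) eps.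
Proof.
move=> eps_hom; case: (eps_hom) => epsD _ _ _; split=> //= [|a]; first exact: additive0.
by rewrite -sub0r (additive_sub epsD) (additive0 epsD) sub0r.
Qed.

Section DualNumbers.
Variables (k : fieldType) (U : algType k) (eps : U -> k).
Hypothesis eps_hom : is_ahom (A := aops_of_alg U) (B := kops k) eps.

(* [k[E]/(E^2)] realised inside [2 x 2] matrices. *)
Let E : 'M[k]_2 := delta_mx 0 1.

Lemma dual_unit_sqr : E * E = 0.
Proof. by rewrite /E -mulmxE mul_delta_mx_cond. Qed.

Definition dual_of_der (D : U -> U) (x : U) : 'M[k]_2 := eps x *: 1 + eps (D x) *: E.

Lemma dual_of_der_ahom D : is_der D ->
  is_ahom (A := aops_of_alg U) (B := aops_of_alg 'M[k]_2) (dual_of_der D).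
Proof.
case: eps_hom => epsD epsM eps1 epsZ [DD DZ DM].
have D1 : D 1 = 0.
  have := DM 1 1; rewrite !mul1r mulr1 => D1_twice.
  by apply: (@addrI _ (D 1)); rewrite addr0 -D1_twice.
split=> /= [a b|a b||c a]; rewrite /dual_of_der.
- by rewrite DD !epsD !scalerDl addrACA.
- rewrite DM epsD !epsM mulrDl !mulrDr -!scalerAl -!scalerAr !mul1r !mulr1 dual_unit_sqr.
  by rewrite !scaler0 addr0 !scalerA scalerDl addrA -!addrA [X in _ + X]addrC.
- by rewrite D1 eps1 (additive0 epsD) scale1r scale0r addr0.
- by rewrite DZ !epsZ /= scalerDr !scalerA.
Qed.

Lemma dual_of_der_coefE D x : (dual_of_der D x - dual_of_der (fun _ => 0) x) 0 1 = eps (D x).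
Proof.
case: eps_hom => epsD _ _ _.
rewrite /dual_of_der (additive0 epsD) scale0r addr0 addrC addKr mxE /E mxE.
by rewrite !eqxx mulr1.
Qed.
End DualNumbers.

Lemma augmentation_der_eq0 (k : fieldType) (L : lmodType k) (brL : L -> L -> L)
    (inN : L -> Prop) (UN : algType k) (iotaN : L -> UN) (eps : UN -> k)
    (D : UN -> UN) :
  is_env_alg brL inN iotaN -> is_ahom (A := aops_of_alg UN) (B := kops k) eps ->
  is_der D -> (forall a, inN a -> eps (D (iotaN a)) = 0) ->
  forall x, eps (D x) = 0.
Proof.
move=> [[iotaD iotaM] univ] eps_hom derD epsDN x.
have zero_der_U : is_der (fun _ : UN => 0).
  by split=> *; rewrite ?addr0 ?scaler0 ?mulr0 ?mul0r ?addr0.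
have homD := dual_of_der_ahom eps_hom derD.
have hom0 := dual_of_der_ahom eps_hom zero_der_U.
have lieD : lie_map_on brL inN (fun a => dual_of_der eps D (iotaN a)).
  case: (homD) => homDD homDM _ homDZ.
  split=> [c a b aN bN|a b aN bN]; first by rewrite iotaD // homDD homDZ.
  by rewrite iotaM // (additive_sub homDD) !homDM.
have [g [_ _ g_uniq]] := univ _ _ lieD.
rewrite -(dual_of_der_coefE eps_hom D x).
have -> : dual_of_der eps D x = g x by exact: g_uniq.
have -> : dual_of_der eps (fun _ => 0) x = g x.
  apply: g_uniq => // a aN; case: eps_hom => epsD _ _ _.
  by rewrite /dual_of_der epsDN // (additive0 epsD) scale0r.
by rewrite subrr mxE.
Qed.

Section HeisenbergHom.
Variables (k : fieldType) (L : lmodType k) (brL : L -> L -> L) (rho : L -> heis k).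
Hypothesis rho_hom : is_lie_hom brL rho.

Lemma lie_hom_heis_br_kernel a b : rho a = hzero k -> rho (brL a b) = hzero k.
Proof.
by case: rho_hom => _ rhoM ra0; rewrite rhoM ra0 /hbr /hzero /= !mul0r subrr.
Qed.

Lemma lie_hom_heis_br_br a b c : rho (brL (brL a b) c) = hzero k.
Proof. by case: rho_hom => _ rhoM; rewrite !rhoM /hbr /hzero /= !mul0r subrr. Qed.
End HeisenbergHom.

Lemma augmentation_br_der_eq0 (k : fieldType) (L : lmodType k) (brL : L -> L -> L)
    (rho : L -> heis k) (UN : algType k) (iotaN : L -> UN) (eps : UN -> k)
    (D : UN -> UN) (x : L) :
  is_lie_hom brL rho -> is_env_alg brL (fun a => rho a = hzero k) iotaN ->
  is_ahom (A := aops_of_alg UN) (B := kops k) eps ->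
  (forall a, rho a = hzero k -> eps (iotaN a) = 0) ->
  is_der D -> (forall a, rho a = hzero k -> D (iotaN a) = iotaN (brL a x)) ->
  forall y, eps (D y) = 0.
Proof.
move=> rho_hom envN eps_hom epsN derD D_br.
apply: (augmentation_der_eq0 envN eps_hom derD) => a ra0.
by rewrite D_br // epsN // (lie_hom_heis_br_kernel rho_hom).
Qed.

Theorem mainTheorem8
  (k : fieldType) (L : lmodType k) (brL : L -> L -> L) (hL : is_lie brL)
  (u v : L) (hgen : lie_generated brL u v)
  (rho : L -> heis k) (hrho : is_lie_hom brL rho)
  (hu : rho u = hx k) (hv : rho v = hy k)
  (UN : algType k) (iotaN : L -> UN)
  (hUN : is_env_alg brL (fun a => rho a = hzero k) iotaN)
  (eps : UN -> k) (heps : is_ahom (A := aops_of_alg UN) (B := kops k) eps)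
  (heps0 : forall a, rho a = hzero k -> eps (iotaN a) = 0)
  (dw dv du : UN -> UN)
  (hdw : is_der dw) (hdv : is_der dv) (hdu : is_der du)
  (hdw0 : forall a, rho a = hzero k -> dw (iotaN a) = iotaN (brL a (brL v u)))
  (hdv0 : forall a, rho a = hzero k -> dv (iotaN a) = iotaN (brL a v))
  (hdu0 : forall a, rho a = hzero k -> du (iotaN a) = iotaN (brL a u)) :
  let w := brL v u in
  (* U(N)((t_w; d_w)) with the extensions of d_v, d_u *)
  let R1 := laurent (A := aops_of_alg UN) dw in
  let dv1 : R1 -> R1 := ext_der (A := aops_of_alg UN) dw dv (iotaN (brL w v)) in
  let du1 : R1 -> R1 := ext_der (A := aops_of_alg UN) dw du (iotaN (brL w u)) in
  (* U(N)((t_w; d_w))((t_v; d_v)) with the extension of d_u, d_u(t_v) = -t_v w t_v *)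
  let R2 := laurent dv1 in
  let du2 : R2 -> R2 := ext_der dv1 du1 (tpow (A := aops_of_alg UN) dw (-1)) in
  let R3 := laurent du2 in
  (* k((t_z)), k((t_z))((t_y)), k((t_z))((t_y))((t_x; d_x)) *)
  let K1 := laurent (zero_der (kops k)) in
  let K2 := laurent (zero_der K1) in
  let dx1 : K1 -> K1 := ext_der (zero_der (kops k)) (zero_der (kops k)) 0 in
  let dx : K2 -> K2 := ext_der (zero_der K1) dx1 (tpow (A := kops k) (zero_der (kops k)) (-1)) in
  let K3 := laurent dx in
  exists Phw : R1 -> K1,
    [/\ is_ahom Phw,
        (forall (f : R1) (n : int), coef (Phw f) n = eps (coef f n)) &
    exists Phv : R2 -> K2,
    [/\ is_ahom Phv,
        (forall (g : R2) (n : int), coef (Phv g) n = Phw (coef g n)) &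
    exists Phu : R3 -> K3,
      is_ahom Phu /\
      (forall (h : R3) (n : int), coef (Phu h) n = Phv (coef h n))]].
Proof.
move=> w R1 dv1 du1 R2 du2 R3 K1 K2 dx1 dx K3.
have zk := kops_zero_laws k.
have zK1 : zero_laws K1 := laurent_zero_laws zk erefl.
have eps_z := zmod_ahom_to_kops heps.
have eps_brw c : eps (iotaN (brL w c)) = 0 by rewrite heps0 // (lie_hom_heis_br_br hrho).
have eps_dw := augmentation_br_der_eq0 hrho hUN heps heps0 hdw hdw0.
have eps_dv := augmentation_br_der_eq0 hrho hUN heps heps0 hdv hdv0.
have eps_du := augmentation_br_der_eq0 hrho hUN heps heps0 hdu hdu0.
pose Phw : R1 -> K1 := map_ser (A := aops_of_alg UN) (B := kops k) eps.
have Phw_z : is_zmod_ahom Phw :=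
  map_ser_zmod_ahom (A := aops_of_alg UN) (B := kops k) zk erefl eps_z eps_dw.
have Phw_dv1 a : Phw (dv1 a) = zero_der K1 (Phw a).
  by rewrite /Phw /dv1 (map_ser_ext_der_eq0 a zk eps_z eps_dw eps_dv (eps_brw _)).
have Phw_du1 a : Phw (du1 a) = dx1 (Phw a).
  by rewrite /Phw /du1 (map_ser_ext_der_eq0 a zk eps_z eps_dw eps_du (eps_brw _)) /dx1 ext_der0.
exists Phw; split; [by case: Phw_z | apply: coef_map_ser; by case: eps_z |].
pose Phv : R2 -> K2 := map_ser Phw.
have dx1_0 : dx1 (a0 K1) = a0 K1 := ext_der_ser0 zk erefl 0 erefl.
have Phv_z : is_zmod_ahom Phv := map_ser_zmod_ahom zK1 erefl Phw_z Phw_dv1.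
have Phv_du2 g : Phv (du2 g) = dx (Phv g).
  rewrite /Phv /du2 (map_ser_ext_der zK1 erefl dx1_0 Phw_z Phw_dv1 Phw_du1).
  by rewrite /Phw (map_ser_tpow _ (zero_der (kops k)) eps_z).
exists Phv; split; [by case: Phv_z | apply: coef_map_ser; by case: Phw_z |].
have Phu_z := map_ser_zmod_ahom (laurent_zero_laws zK1 erefl)
  (ext_der_ser0 zK1 erefl _ dx1_0) Phv_z Phv_du2.
exists (map_ser Phv); split; [by case: Phu_z | apply: coef_map_ser; by case: Phv_z].
Qed.
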